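(* Let $m\in\{1,2\}$, $K>0$, $\gamma=3$, and let $(\rho,u)$ be a smooth solution ($\rho>0$, $r>0$) of the radially symmetric isentropic Euler equations $$(r^m\rho)_t+(r^m\rho u)_r=0,\qquad (r^m\rho u)_t+(r^m\rho u^2)_r+r^m p_r=0,\qquad p=K\rho^\gamma,$$ in the subsonic regime $c_1<0<c_2$. Then: (i) if the 1-wave is rarefaction (R), the 2-wave can only change from compression (C) to R; (ii) if the 1-wave is C, the 2-wave can only change from R to C; (iii) if the 2-wave is R, the 1-wave can only change from R to C; (iv) if the 2-wave is C, the 1-wave can only change from C to R.
   Context: Here $h=\sqrt{K\gamma}\,\rho^{(\gamma-1)/2}$, $c_1=u-h$, $c_2=u+h$, and $$\alpha=u_r+\tfrac{2}{\gamma-1}h_r+\tfrac{m}{r}\tfrac{hu}{c_2},\qquad \beta=u_r-\tfrac{2}{\gamma-1}h_r-\tfrac{m}{r}\tfrac{hu}{c_1}.$$ The 1-wave is rarefaction (compression) at a point if $\beta>0$ ($\beta<0$); the 2-wave is rarefaction (compression) if $\alpha>0$ ($\alpha<0$). Characteristic flow maps: $\partial_t\xi(r_0,t)=c_1(\xi(r_0,t),t)$, $\partial_t\psi(r_0,t)=c_2(\psi(r_0,t),t)$, $\xi(r_0,0)=\psi(r_0,0)=r_0$. A change of the 2-wave from R to C means there are $r_0,t^*,\varepsilon>0$ such that $g(t)=\alpha(\psi(r_0,t),t)$ satisfies $g(t^* )=0$, $g>0$ on $(t^*-\varepsilon,t^* )$, $g<0$ on $(t^*,t^*+\varepsilon)$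 (from C to R: opposite signs); a change of the 1-wave is defined likewise with $\beta(\xi(r_0,t),t)$. ''If the 1-wave is R then the 2-wave can only change from C to R'' means no R-to-C change of the 2-wave occurs at a time $t^*$ where the 1-wave is R at the crossing point; the other items are interpreted analogously. *)

From Stdlib Require Import Reals Lra.
From Coquelicot Require Import Coquelicot.
Open Scope R_scope.

Definition d_r (f : R -> R -> R) (r t : R) : R := Derive (fun s => f s t) r.
Definition d_t (f : R -> R -> R) (r t : R) : R := Derive (fun s => f r s) t.

Fixpoint Ck_on (D : R -> R -> Prop) (k : nat) (f : R -> R -> R) : Prop :=
  (forall r t, D r t -> continuous (fun p : R * R => f (fst p) (snd p)) (r, t)) /\
  match k with
  | O => True
  | S k' =>
      (forall r t, D r t -> ex_derive (fun s => f s t) r /\ ex_derive (fun s => f r s) t)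
      /\ Ck_on D k' (d_r f) /\ Ck_on D k' (d_t f)
  end.

Definition smooth_on (D : R -> R -> Prop) (f : R -> R -> R) : Prop :=
  forall k, Ck_on D k f.

Definition region (T : R) (r t : R) : Prop := 0 < r /\ 0 < t < T.

Definition pressure (K gamma : R) (rho : R -> R -> R) (r t : R) : R :=
  K * Rpower (rho r t) gamma.
Definition hh (K gamma : R) (rho : R -> R -> R) (r t : R) : R :=
  sqrt (K * gamma) * Rpower (rho r t) ((gamma - 1) / 2).
Definition cc1 (K gamma : R) (rho u : R -> R -> R) (r t : R) : R :=
  u r t - hh K gamma rho r t.
Definition cc2 (K gamma : R) (rho u : R -> R -> R) (r t : R) : R :=
  u r t + hh K gamma rho r t.

Definition alpha (m : nat) (K gamma : R) (rho u : R -> R -> R) (r t : R) : R :=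
  d_r u r t + 2 / (gamma - 1) * d_r (hh K gamma rho) r t
  + INR m / r * (hh K gamma rho r t * u r t / cc2 K gamma rho u r t).
Definition beta (m : nat) (K gamma : R) (rho u : R -> R -> R) (r t : R) : R :=
  d_r u r t - 2 / (gamma - 1) * d_r (hh K gamma rho) r t
  - INR m / r * (hh K gamma rho r t * u r t / cc1 K gamma rho u r t).

Definition euler_radial (D : R -> R -> Prop) (m : nat) (K gamma : R)
    (rho u : R -> R -> R) : Prop :=
  forall r t, D r t ->
    d_t (fun s τ => s ^ m * rho s τ) r t
      + d_r (fun s τ => s ^ m * rho s τ * u s τ) r t = 0 /\
    d_t (fun s τ => s ^ m * rho s τ * u s τ) r t
      + d_r (fun s τ => s ^ m * rho s τ * (u s τ) ^ 2) r t
      + r ^ m * d_r (pressure K gamma rho) r t = 0.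

Definition char_curve (T : R) (c : R -> R -> R) (r0 : R) (psi : R -> R) : Prop :=
  psi 0 = r0 /\
  (forall t, 0 <= t < T -> 0 < psi t) /\
  (forall t, 0 <= t < T -> continuity_pt psi t) /\
  (forall t, 0 < t < T -> is_derive psi t (c (psi t) t)).

Definition change_pos_to_neg (g : R -> R) (tstar eps : R) : Prop :=
  g tstar = 0 /\
  (forall t, tstar - eps < t < tstar -> g t > 0) /\
  (forall t, tstar < t < tstar + eps -> g t < 0).
Definition change_neg_to_pos (g : R -> R) (tstar eps : R) : Prop :=
  g tstar = 0 /\
  (forall t, tstar - eps < t < tstar -> g t < 0) /\
  (forall t, tstar < t < tstar + eps -> g t > 0).

From Stdlib Require Import Reals Lra.
From Coquelicot Require Import Coquelicot.
Open Scope R_scope.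

(* For gamma = 3 the sound speed is h = sqrt(3K) rho, so alpha and beta are the
   two instances c = sqrt(3K) and c = -sqrt(3K) of
     w_c = u_r + c rho_r + (m/r) c rho u / (u + c rho),
   and c2, c1 are the speeds u + c rho.  Differentiating w_c along the
   characteristic of speed u + c rho and eliminating the time derivatives with
   the Euler equations gives, at a zero of w_c,
     d/dt w_c = m (u - c rho)^2 / (2 r (u + c rho)) * w_(-c).
   Hence where alpha vanishes on a 2-characteristic its derivative has the sign
   of beta (c2 > 0), and where beta vanishes on a 1-characteristic its
   derivative has the sign opposite to alpha (c1 < 0).  A nonzero derivative at
   t* rules out a sign change in the other direction. *)

Lemma DL_pol_1 f x y dx dy :
  DL_pol 1 f x y dx dy =
  f x y + Derive (fun z => f z y) x * dx + Derive (fun z => f x z) y * dy.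
Proof.
  unfold DL_pol, differential, partial_derive; simpl.
  unfold Binomial.C; simpl; field.
Qed.

Lemma differentiable_pt_lim_ex_diff_n_2 f x y :
  locally_2d (ex_diff_n f 2) x y ->
  differentiable_pt_lim f x y (Derive (fun z => f z y) x) (Derive (fun z => f x z) y).
Proof.
  intros Hf eps.
  destruct (Taylor_Lagrange_2d f 1 x y Hf) as [C HC].
  (* the remainder C M^2 is at most eps M as soon as M < eps / (|C| + 1) *)
  set (delta := eps / (Rabs C + 1)).
  assert (Hdelta : 0 < delta).
  { apply Rdiv_lt_0_compat; [apply cond_pos | pose proof (Rabs_pos C); lra]. }
  assert (Heps : pos eps = delta * (Rabs C + 1))
    by (unfold delta; field; pose proof (Rabs_pos C); lra).
  apply (locally_2d_impl (fun u v => (Rabs (u - x) < delta /\ Rabs (v - y) < delta) /\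
    Rabs (f u v - DL_pol 1 f x y (u - x) (v - y)) <=
    C * Rmax (Rabs (u - x)) (Rabs (v - y)) ^ 2)).
  - apply locally_2d_forall. intros u v [[Hu Hv] Htaylor].
    rewrite DL_pol_1 in Htaylor.
    set (M := Rmax (Rabs (u - x)) (Rabs (v - y))) in *.
    assert (HM : 0 <= M < delta).
    { split; [apply (Rle_trans _ _ _ (Rabs_pos (u - x)) (Rmax_l _ _))|].
      apply Rmax_lub_lt; assumption. }
    replace (f u v - f x y - _) with
      (f u v - (f x y + Derive (fun z => f z y) x * (u - x)
                + Derive (fun z => f x z) y * (v - y))) by ring.
    assert (C * M ^ 2 <= Rabs C * M ^ 2)
      by (apply Rmult_le_compat_r; [apply pow2_ge_0 | apply Rle_abs]).
    assert (Rabs C * M ^ 2 <= Rabs C * delta * M)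
      by (assert (0 <= Rabs C * M) by (pose proof (Rabs_pos C); nra); simpl; nra).
    assert (0 <= delta * M) by nra.
    rewrite Heps. lra.
  - apply locally_2d_and; [| exact HC].
    exists (mkposreal _ Hdelta). exact (fun u v Hu Hv => conj Hu Hv).
Qed.

Section Smoothness.

Variable D : R -> R -> Prop.

Lemma Ck_on_ex_diff_n k : forall f r t, Ck_on D k f -> D r t -> ex_diff_n f k r t.
Proof.
  induction k as [|k IH]; intros f r t Hf HD; simpl in Hf |- *.
  - split; [apply continuity_2d_pt_filterlim, (proj1 Hf r t HD) | exact I].
  - destruct Hf as [Hc [Hex [Hr Ht]]].
    split; [apply continuity_2d_pt_filterlim, (Hc r t HD)|].
    destruct (Hex r t HD) as [Ex Ey].
    repeat split; [exact Ex | exact Ey | exact (IH _ r t Hr HD) | exact (IH _ r t Ht HD)].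
Qed.

Lemma smooth_on_d_r f : smooth_on D f -> smooth_on D (d_r f).
Proof. intros Hf k. exact (proj1 (proj2 (proj2 (Hf (S k))))). Qed.

Lemma smooth_on_d_t f : smooth_on D f -> smooth_on D (d_t f).
Proof. intros Hf k. exact (proj2 (proj2 (proj2 (Hf (S k))))). Qed.

Lemma smooth_on_ex_derive_r f r t : smooth_on D f -> D r t -> ex_derive (fun s => f s t) r.
Proof. intros Hf HD. exact (proj1 (proj1 (proj2 (Hf 1%nat)) r t HD)). Qed.

Lemma smooth_on_ex_derive_t f r t : smooth_on D f -> D r t -> ex_derive (fun s => f r s) t.
Proof. intros Hf HD. exact (proj2 (proj1 (proj2 (Hf 1%nat)) r t HD)). Qed.

Lemma smooth_on_continuity_2d_pt f r t : smooth_on D f -> D r t -> continuity_2d_pt f r t.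
Proof. intros Hf HD. apply continuity_2d_pt_filterlim, (proj1 (Hf 0%nat) r t HD). Qed.

Hypothesis D_open : forall r t, D r t -> locally_2d D r t.

Lemma smooth_on_differentiable f r t : smooth_on D f -> D r t ->
  differentiable_pt_lim f r t (d_r f r t) (d_t f r t).
Proof.
  intros Hf HD. apply differentiable_pt_lim_ex_diff_n_2.
  apply (locally_2d_impl D); [| exact (D_open r t HD)].
  apply locally_2d_forall. intros r' t'. exact (Ck_on_ex_diff_n 2 f r' t' (Hf 2%nat)).
Qed.

Lemma smooth_on_d_r_d_t f r t : smooth_on D f -> D r t ->
  d_r (d_t f) r t = d_t (d_r f) r t.
Proof.
  intros Hf HD. apply Schwarz.
  - apply (locally_2d_impl D); [| exact (D_open r t HD)].
    apply locally_2d_forall. intros r' t' HD'.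
    repeat split.
    + exact (smooth_on_ex_derive_r f r' t' Hf HD').
    + exact (smooth_on_ex_derive_t f r' t' Hf HD').
    + exact (smooth_on_ex_derive_r _ r' t' (smooth_on_d_t f Hf) HD').
    + exact (smooth_on_ex_derive_t _ r' t' (smooth_on_d_r f Hf) HD').
  - exact (smooth_on_continuity_2d_pt _ r t (smooth_on_d_r _ (smooth_on_d_t f Hf)) HD).
  - exact (smooth_on_continuity_2d_pt _ r t (smooth_on_d_t _ (smooth_on_d_r f Hf)) HD).
Qed.

Lemma is_derive_along_curve f psi t v : smooth_on D f -> D (psi t) t ->
  is_derive psi t v ->
  is_derive (fun s => f (psi s) s) t (d_r f (psi t) t * v + d_t f (psi t) t).
Proof.
  intros Hf HD Hpsi. apply is_derive_Reals.
  rewrite <- (Rmult_1_r (d_t f (psi t) t)).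
  apply (derivable_pt_lim_comp_2d f psi (fun s => s)).
  - exact (smooth_on_differentiable f _ _ Hf HD).
  - exact (proj1 (is_derive_Reals _ _ _) Hpsi).
  - apply derivable_pt_lim_id.
Qed.

End Smoothness.

Lemma region_open T r t : region T r t -> locally_2d (region T) r t.
Proof.
  intros [Hr [Ht0 HtT]].
  assert (Hd : 0 < Rmin r (Rmin t (T - t))) by (repeat apply Rmin_pos; lra).
  exists (mkposreal _ Hd). simpl. intros r' t' Hr' Ht'.
  apply Rabs_lt_between in Hr'. apply Rabs_lt_between in Ht'.
  pose proof (Rmin_l r (Rmin t (T - t))). pose proof (Rmin_r r (Rmin t (T - t))).
  pose proof (Rmin_l t (T - t)). pose proof (Rmin_r t (T - t)).
  repeat split; lra.
Qed.

Lemma INR_pow_pred n x : x <> 0 -> INR n * x ^ pred n = x ^ n * (INR n / x).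
Proof.
  intros Hx. destruct n as [|n]; simpl pred.
  - change (INR 0) with 0; rewrite Rmult_0_l, Rdiv_0_l, Rmult_0_r. reflexivity.
  - rewrite <- tech_pow_Rmult. field. exact Hx.
Qed.

Lemma Derive_locally_zero (g : R -> R) x : locally x (fun s => g s = 0) -> Derive g x = 0.
Proof. intros Hg. rewrite (Derive_ext_loc g (fun _ => 0)); [apply Derive_const | exact Hg]. Qed.

Lemma is_derive_pos_right g x l e : is_derive g x l -> 0 < l -> 0 < e ->
  exists t, x < t < x + e /\ g x < g t.
Proof.
  intros Hg Hl He. apply is_derive_Reals in Hg.
  destruct (Hg l Hl) as [d Hd].
  assert (Hh : 0 < Rmin d e / 2 < Rmin d e) by (pose proof (Rmin_pos d e (cond_pos d) He); lra).
  pose proof (Rmin_l d e). pose proof (Rmin_r d e).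
  set (h := Rmin d e / 2) in *.
  specialize (Hd h ltac:(lra) ltac:(rewrite Rabs_pos_eq; lra)).
  apply Rabs_lt_between in Hd.
  exists (x + h). split; [lra |].
  assert (Hq : 0 < (g (x + h) - g x) / h * h) by (apply Rmult_lt_0_compat; lra).
  replace ((g (x + h) - g x) / h * h) with (g (x + h) - g x) in Hq by (field; lra).
  lra.
Qed.

Lemma change_pos_to_neg_derive_nonpos g tstar eps l : 0 < eps ->
  is_derive g tstar l -> change_pos_to_neg g tstar eps -> l <= 0.
Proof.
  intros He Hg [Hzero [_ Hneg]].
  apply Rnot_lt_le. intros Hl.
  destruct (is_derive_pos_right g tstar l eps Hg Hl He) as [t [Ht Hgt]].
  specialize (Hneg t Ht). lra.
Qed.

Lemma change_neg_to_pos_derive_nonneg g tstar eps l : 0 < eps ->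
  is_derive g tstar l -> change_neg_to_pos g tstar eps -> 0 <= l.
Proof.
  intros He Hg [Hzero [Hl Hr]].
  rewrite <- (Ropp_involutive l). apply Ropp_0_ge_le_contravar, Rle_ge.
  apply (change_pos_to_neg_derive_nonpos (fun t => - g t) tstar eps); [exact He | |].
  - exact (is_derive_opp g tstar l Hg).
  - split; [rewrite Hzero; ring | split; intros t Ht; simpl].
    + apply Ropp_0_gt_lt_contravar, Hl, Ht.
    + apply Ropp_lt_gt_0_contravar, Hr, Ht.
Qed.

Lemma char_curve_region T c r0 psi : char_curve T c r0 psi ->
  forall t, 0 < t < T -> region T (psi t) t.
Proof. intros [_ [Hpos _]] t Ht. split; [apply Hpos; lra | exact Ht]. Qed.

Lemma char_curve_region_near T c r0 psi t0 : char_curve T c r0 psi -> 0 < t0 < T ->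
  locally t0 (fun t => region T (psi t) t).
Proof.
  intros Hpsi Ht0.
  apply (filter_imp (fun t => 0 < t < T)); [exact (char_curve_region T c r0 psi Hpsi) |].
  exact (open_and _ _ (open_gt 0) (open_lt T) t0 Ht0).
Qed.

Definition gradient_form (M c r rho u ur rr : R) : R :=
  ur + c * rr + M / r * (c * rho * u / (u + c * rho)).

Definition wave_gradient (m : nat) (c : R) (rho u : R -> R -> R) (r t : R) : R :=
  gradient_form (INR m) c r (rho r t) (u r t) (d_r u r t) (d_r rho r t).

Lemma is_derive_gradient_form M c (P Rh U Ur Rr : R -> R) t dP dRh dU dUr dRr :
  is_derive P t dP -> is_derive Rh t dRh -> is_derive U t dU ->
  is_derive Ur t dUr -> is_derive Rr t dRr ->
  P t <> 0 -> U t + c * Rh t <> 0 ->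
  is_derive (fun s => gradient_form M c (P s) (Rh s) (U s) (Ur s) (Rr s)) t
    (dUr + c * dRr - M * dP / P t ^ 2 * (c * Rh t * U t / (U t + c * Rh t))
     + M / P t * (c * ((dRh * U t + Rh t * dU) * (U t + c * Rh t)
                       - Rh t * U t * (dU + c * dRh)) / (U t + c * Rh t) ^ 2)).
Proof.
  intros HP HRh HU HUr HRr HP0 Hv.
  assert (EP : ex_derive P t) by (eexists; exact HP).
  assert (ERh : ex_derive Rh t) by (eexists; exact HRh).
  assert (EU : ex_derive U t) by (eexists; exact HU).
  assert (EUr : ex_derive Ur t) by (eexists; exact HUr).
  assert (ERr : ex_derive Rr t) by (eexists; exact HRr).
  unfold gradient_form. auto_derive; [tauto|].
  rewrite (is_derive_unique (fun x : R => P x) t dP HP),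
    (is_derive_unique (fun x : R => Rh x) t dRh HRh),
    (is_derive_unique (fun x : R => U x) t dU HU),
    (is_derive_unique (fun x : R => Ur x) t dUr HUr),
    (is_derive_unique (fun x : R => Rr x) t dRr HRr).
  field. tauto.
Qed.

(* rt, ut, rrr, urr, rtr, utr stand for rho_t, u_t, rho_rr, u_rr, rho_rt, u_rt;
   the four equations are the Euler system and its r-derivative, and the left
   side is the derivative of gradient_form along the characteristic of speed v
   given by is_derive_gradient_form. *)
Lemma gradient_form_transport M c K r rho u rr ur rt ut rrr urr rtr utr :
  c ^ 2 = 3 * K -> r <> 0 -> u + c * rho <> 0 -> u - c * rho <> 0 ->
  rt + u * rr + rho * ur + M * rho * u / r = 0 ->
  ut + u * ur + 3 * K * rho * rr = 0 ->
  rtr + 2 * ur * rr + u * rrr + rho * urr + M * (rr * u + rho * ur) / r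
    - M * rho * u / r ^ 2 = 0 ->
  utr + ur ^ 2 + u * urr + 3 * K * (rr ^ 2 + rho * rrr) = 0 ->
  gradient_form M c r rho u ur rr = 0 ->
  let v := u + c * rho in
  let drho := rr * v + rt in
  let du := ur * v + ut in
  (urr * v + utr) + c * (rrr * v + rtr) - M * v / r ^ 2 * (c * rho * u / (u + c * rho))
  + M / r * (c * ((drho * u + rho * du) * (u + c * rho) - rho * u * (du + c * drho))
             / (u + c * rho) ^ 2)
  = M * (u - c * rho) ^ 2 / (2 * r * (u + c * rho)) * gradient_form M (-c) r rho u ur rr.
Proof.
  intros Hc Hr Hv Hw Hmass Hmom Hmass_r Hmom_r Hzero v drho du.
  subst v drho du. unfold gradient_form in *.
  assert (Hur : ur = - c * rr - M * c * rho * u / (r * (u + c * rho))).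
  { rewrite <- (Rplus_0_l (- c * rr - _)), <- Hzero. field. tauto. }
  assert (Hrt : rt = - (u * rr + rho * ur + M * rho * u / r)) by lra.
  assert (Hut : ut = - (u * ur + 3 * K * rho * rr)) by lra.
  assert (Hrtr : rtr = - (2 * ur * rr + u * rrr + rho * urr + M * (rr * u + rho * ur) / r
                           - M * rho * u / r ^ 2)) by lra.
  assert (Hutr : utr = - (ur ^ 2 + u * urr + 3 * K * (rr ^ 2 + rho * rrr))) by lra.
  clear Hmass Hmom Hmass_r Hmom_r Hzero.
  subst rt ut rtr utr. subst ur. replace K with (c ^ 2 / 3) by lra.
  field. split; [intro; apply Hw; lra | tauto].
Qed.

Definition mass_residual (m : nat) (rho u : R -> R -> R) (r t : R) : R :=
  d_t rho r t + u r t * d_r rho r t + rho r t * d_r u r t + INR m * rho r t * u r t / r.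

Definition momentum_residual (K : R) (rho u : R -> R -> R) (r t : R) : R :=
  d_t u r t + u r t * d_r u r t + 3 * K * rho r t * d_r rho r t.

Section RadialEuler.

Variables (m : nat) (K T : R) (rho u : R -> R -> R).
Hypotheses (rho_smooth : smooth_on (region T) rho) (u_smooth : smooth_on (region T) u)
  (rho_pos : forall r t, region T r t -> 0 < rho r t)
  (euler : euler_radial (region T) m K 3 rho u).

Lemma region_near_r r t : region T r t -> locally r (fun s => region T s t).
Proof. intros H. exact (locally_2d_1d_const_y _ _ _ (region_open T r t H)). Qed.

Lemma hh_cubic r t : region T r t -> hh K 3 rho r t = sqrt (K * 3) * rho r t.
Proof.
  intros H. unfold hh. replace ((3 - 1) / 2) with 1 by field.
  rewrite Rpower_1; [reflexivity | exact (rho_pos r t H)].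
Qed.

Lemma d_r_hh_cubic r t : region T r t -> d_r (hh K 3 rho) r t = sqrt (K * 3) * d_r rho r t.
Proof.
  intros H. unfold d_r.
  rewrite (Derive_ext_loc _ (fun s => sqrt (K * 3) * rho s t)).
  - apply Derive_scal.
  - apply (filter_imp _ _ (fun s Hs => hh_cubic s t Hs)), region_near_r, H.
Qed.

Lemma d_r_pressure_cubic r t : region T r t ->
  d_r (pressure K 3 rho) r t = 3 * K * rho r t ^ 2 * d_r rho r t.
Proof.
  intros H. unfold d_r, pressure.
  rewrite (Derive_ext_loc _ (fun s => K * rho s t ^ 3)).
  - apply is_derive_unique.
    auto_derive; [exact (smooth_on_ex_derive_r _ rho r t rho_smooth H) | ring].
  - apply (filter_imp (fun s => region T s t)); [| apply region_near_r, H].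
    intros s Hs. rewrite <- Rpower_pow by exact (rho_pos s t Hs).
    do 2 f_equal. simpl. ring.
Qed.

Lemma euler_radial_nonconservative r t : region T r t ->
  mass_residual m rho u r t = 0 /\ momentum_residual K rho u r t = 0.
Proof.
  intros H. destruct (euler r t H) as [Emass Emom].
  pose proof (smooth_on_ex_derive_r _ rho r t rho_smooth H).
  pose proof (smooth_on_ex_derive_t _ rho r t rho_smooth H).
  pose proof (smooth_on_ex_derive_r _ u r t u_smooth H).
  pose proof (smooth_on_ex_derive_t _ u r t u_smooth H).
  assert (Hr : 0 < r) by apply H.
  assert (Hrho : 0 < rho r t) by exact (rho_pos r t H).
  assert (Hrm : 0 < r ^ m) by (apply pow_lt, Hr).
  assert (Hpow : INR m * r ^ pred m = r ^ m * (INR m / r))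
    by (apply INR_pow_pred; lra).
  assert (Dt_rho : d_t (fun s τ => s ^ m * rho s τ) r t = r ^ m * d_t rho r t).
  { apply is_derive_unique. auto_derive; [assumption | unfold d_t; ring]. }
  assert (Dt_rhou : d_t (fun s τ => s ^ m * rho s τ * u s τ) r t
                    = r ^ m * (d_t rho r t * u r t + rho r t * d_t u r t)).
  { apply is_derive_unique. auto_derive; [tauto | unfold d_t; ring]. }
  assert (Dr_rhou : d_r (fun s τ => s ^ m * rho s τ * u s τ) r t
                    = INR m * r ^ pred m * rho r t * u r t
                      + r ^ m * (d_r rho r t * u r t + rho r t * d_r u r t)).
  { apply is_derive_unique. auto_derive; [tauto | unfold d_r; ring]. }
  assert (Dr_rhou2 : d_r (fun s τ => s ^ m * rho s τ * u s τ ^ 2) r t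
                     = INR m * r ^ pred m * rho r t * u r t ^ 2
                       + r ^ m * (d_r rho r t * u r t ^ 2
                                  + rho r t * (2 * u r t * d_r u r t))).
  { apply is_derive_unique. auto_derive; [tauto | unfold d_r; ring]. }
  rewrite Dt_rho, Dr_rhou, Hpow in Emass.
  rewrite Dt_rhou, Dr_rhou2, Hpow, d_r_pressure_cubic in Emom by exact H.
  assert (Hmass : r ^ m * mass_residual m rho u r t = 0).
  { rewrite <- Emass. unfold mass_residual. field. lra. }
  assert (Hmom : r ^ m * (u r t * mass_residual m rho u r t
                          + rho r t * momentum_residual K rho u r t) = 0).
  { rewrite <- Emom. unfold mass_residual, momentum_residual. field. lra. }
  assert (Hm0 : mass_residual m rho u r t = 0)
    by (apply (Rmult_eq_reg_l (r ^ m)); lra).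
  split; [exact Hm0|].
  apply (Rmult_eq_reg_l (r ^ m * rho r t)).
  - rewrite Rmult_0_r, <- Hmom, Hm0. ring.
  - apply Rmult_integral_contrapositive_currified; lra.
Qed.

Lemma euler_radial_nonconservative_d_r r t : region T r t ->
  d_r (d_t rho) r t + 2 * d_r u r t * d_r rho r t + u r t * d_r (d_r rho) r t
    + rho r t * d_r (d_r u) r t + INR m * (d_r rho r t * u r t + rho r t * d_r u r t) / r
    - INR m * rho r t * u r t / r ^ 2 = 0 /\
  d_r (d_t u) r t + d_r u r t ^ 2 + u r t * d_r (d_r u) r t
    + 3 * K * (d_r rho r t ^ 2 + rho r t * d_r (d_r rho) r t) = 0.
Proof.
  intros H.
  assert (Hr : 0 < r) by apply H.
  pose proof (smooth_on_ex_derive_r _ rho r t rho_smooth H).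
  pose proof (smooth_on_ex_derive_r _ u r t u_smooth H).
  pose proof (smooth_on_ex_derive_r _ _ r t (smooth_on_d_r _ rho rho_smooth) H).
  pose proof (smooth_on_ex_derive_r _ _ r t (smooth_on_d_r _ u u_smooth) H).
  pose proof (smooth_on_ex_derive_r _ _ r t (smooth_on_d_t _ rho rho_smooth) H).
  pose proof (smooth_on_ex_derive_r _ _ r t (smooth_on_d_t _ u u_smooth) H).
  split.
  - rewrite <- (Derive_locally_zero (fun s => mass_residual m rho u s t) r)
      by exact (filter_imp _ _ (fun s Hs => proj1 (euler_radial_nonconservative s t Hs))
                            (region_near_r r t H)).
    symmetry. apply is_derive_unique. unfold mass_residual.
    auto_derive; [repeat split; auto; lra | unfold d_r; field; lra].
  - rewrite <- (Derive_locally_zero (fun s => momentum_residual K rho u s t) r)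
      by exact (filter_imp _ _ (fun s Hs => proj2 (euler_radial_nonconservative s t Hs))
                            (region_near_r r t H)).
    symmetry. apply is_derive_unique. unfold momentum_residual.
    auto_derive; [repeat split; auto | unfold d_r; ring].
Qed.

Lemma wave_gradient_transport c psi t0 :
  c ^ 2 = 3 * K -> region T (psi t0) t0 ->
  is_derive psi t0 (u (psi t0) t0 + c * rho (psi t0) t0) ->
  u (psi t0) t0 + c * rho (psi t0) t0 <> 0 -> u (psi t0) t0 - c * rho (psi t0) t0 <> 0 ->
  wave_gradient m c rho u (psi t0) t0 = 0 ->
  is_derive (fun t => wave_gradient m c rho u (psi t) t) t0
    (INR m * (u (psi t0) t0 - c * rho (psi t0) t0) ^ 2
       / (2 * psi t0 * (u (psi t0) t0 + c * rho (psi t0) t0))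
     * wave_gradient m (-c) rho u (psi t0) t0).
Proof.
  intros Hc H Hpsi Hv Hw Hzero.
  assert (Hx : psi t0 <> 0) by (apply Rgt_not_eq, H).
  pose proof (region_open T) as Hopen.
  eapply (eq_ind _ (is_derive _ t0)).
  - apply (is_derive_gradient_form (INR m) c psi); try eassumption.
    + exact (is_derive_along_curve _ Hopen rho psi t0 _ rho_smooth H Hpsi).
    + exact (is_derive_along_curve _ Hopen u psi t0 _ u_smooth H Hpsi).
    + exact (is_derive_along_curve _ Hopen _ psi t0 _ (smooth_on_d_r _ u u_smooth) H Hpsi).
    + exact (is_derive_along_curve _ Hopen _ psi t0 _ (smooth_on_d_r _ rho rho_smooth) H Hpsi).
  - destruct (euler_radial_nonconservative _ _ H) as [Hmass Hmom].
    destruct (euler_radial_nonconservative_d_r _ _ H) as [Hmass_r Hmom_r].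
    rewrite (smooth_on_d_r_d_t _ Hopen rho _ _ rho_smooth H) in Hmass_r.
    rewrite (smooth_on_d_r_d_t _ Hopen u _ _ u_smooth H) in Hmom_r.
    exact (gradient_form_transport _ _ K _ _ _ _ _ _ _ _ _ _ _ Hc Hx Hv Hw
             Hmass Hmom Hmass_r Hmom_r Hzero).
Qed.

Lemma wave_gradient_transport_sign c psi t0 : (0 < m)%nat -> c ^ 2 = 3 * K ->
  region T (psi t0) t0 ->
  is_derive psi t0 (u (psi t0) t0 + c * rho (psi t0) t0) ->
  (u (psi t0) t0 + c * rho (psi t0) t0) * (u (psi t0) t0 - c * rho (psi t0) t0) < 0 ->
  wave_gradient m c rho u (psi t0) t0 = 0 ->
  exists k, 0 < k * (u (psi t0) t0 + c * rho (psi t0) t0) /\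
    is_derive (fun t => wave_gradient m c rho u (psi t) t) t0
      (k * wave_gradient m (-c) rho u (psi t0) t0).
Proof.
  intros Hm Hc H Hpsi Hsub Hzero.
  set (x := psi t0) in *. set (v := u x t0 + c * rho x t0) in *.
  set (w := u x t0 - c * rho x t0) in *.
  assert (Hv : v <> 0) by (intro E; rewrite E in Hsub; lra).
  assert (Hw : w <> 0) by (intro E; rewrite E in Hsub; lra).
  assert (Hx : 0 < x) by apply H.
  exists (INR m * w ^ 2 / (2 * x * v)). split.
  - replace (INR m * w ^ 2 / (2 * x * v) * v) with (INR m * w ^ 2 / (2 * x)) by (field; lra).
    apply Rdiv_lt_0_compat; [| lra].
    apply Rmult_lt_0_compat; [apply lt_0_INR, Hm | apply pow2_gt_0, Hw].
  - exact (wave_gradient_transport c psi t0 Hc H Hpsi Hv Hw Hzero).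
Qed.

Hypothesis K_nonneg : 0 <= K.

Lemma sqrt_3K_sqr : sqrt (K * 3) ^ 2 = 3 * K.
Proof. rewrite <- Rsqr_pow2, Rsqr_sqrt; lra. Qed.

Lemma cc2_cubic r t : region T r t -> cc2 K 3 rho u r t = u r t + sqrt (K * 3) * rho r t.
Proof. intros H. unfold cc2. rewrite hh_cubic by exact H. reflexivity. Qed.

Lemma cc1_cubic r t : region T r t -> cc1 K 3 rho u r t = u r t + - sqrt (K * 3) * rho r t.
Proof. intros H. unfold cc1. rewrite hh_cubic by exact H. ring. Qed.

Lemma alpha_cubic r t : region T r t ->
  alpha m K 3 rho u r t = wave_gradient m (sqrt (K * 3)) rho u r t.
Proof.
  intros H. unfold alpha, wave_gradient, gradient_form.
  rewrite cc2_cubic, hh_cubic, d_r_hh_cubic by exact H.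
  replace (2 / (3 - 1)) with 1 by field. ring.
Qed.

Lemma beta_cubic r t : region T r t ->
  beta m K 3 rho u r t = wave_gradient m (- sqrt (K * 3)) rho u r t.
Proof.
  intros H. unfold beta, wave_gradient, gradient_form.
  rewrite cc1_cubic, hh_cubic, d_r_hh_cubic by exact H.
  replace (2 / (3 - 1)) with 1 by field. unfold Rdiv. ring.
Qed.

Hypothesis subsonic : forall r t, region T r t ->
  cc1 K 3 rho u r t < 0 /\ 0 < cc2 K 3 rho u r t.

Lemma alpha_along_2_characteristic r0 psi t0 : (0 < m)%nat ->
  char_curve T (cc2 K 3 rho u) r0 psi -> 0 < t0 < T ->
  alpha m K 3 rho u (psi t0) t0 = 0 ->
  exists k, 0 < k /\ is_derive (fun t => alpha m K 3 rho u (psi t) t) t0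
                        (k * beta m K 3 rho u (psi t0) t0).
Proof.
  intros Hm Hpsi Ht0 Hzero.
  pose proof (char_curve_region _ _ _ _ Hpsi t0 Ht0) as H.
  destruct (subsonic _ _ H) as [Hc1 Hc2].
  rewrite cc1_cubic in Hc1 by exact H. rewrite cc2_cubic in Hc2 by exact H.
  destruct (wave_gradient_transport_sign (sqrt (K * 3)) psi t0 Hm sqrt_3K_sqr H)
    as [k [Hk Hd]].
  - rewrite <- cc2_cubic by exact H. exact (proj2 (proj2 (proj2 Hpsi)) t0 Ht0).
  - nra.
  - rewrite <- alpha_cubic by exact H. exact Hzero.
  - exists k. split; [nra |].
    rewrite beta_cubic by exact H.
    refine (is_derive_ext_loc _ _ _ _ _ Hd).
    apply (filter_imp _ _ (fun t Ht => eq_sym (alpha_cubic _ t Ht))).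
    exact (char_curve_region_near _ _ _ _ _ Hpsi Ht0).
Qed.

Lemma beta_along_1_characteristic r0 xi t0 : (0 < m)%nat ->
  char_curve T (cc1 K 3 rho u) r0 xi -> 0 < t0 < T ->
  beta m K 3 rho u (xi t0) t0 = 0 ->
  exists k, k < 0 /\ is_derive (fun t => beta m K 3 rho u (xi t) t) t0
                        (k * alpha m K 3 rho u (xi t0) t0).
Proof.
  intros Hm Hxi Ht0 Hzero.
  pose proof (char_curve_region _ _ _ _ Hxi t0 Ht0) as H.
  destruct (subsonic _ _ H) as [Hc1 Hc2].
  rewrite cc1_cubic in Hc1 by exact H. rewrite cc2_cubic in Hc2 by exact H.
  assert (Hc : (- sqrt (K * 3)) ^ 2 = 3 * K) by (rewrite <- sqrt_3K_sqr; ring).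
  destruct (wave_gradient_transport_sign (- sqrt (K * 3)) xi t0 Hm Hc H)
    as [k [Hk Hd]].
  - rewrite <- cc1_cubic by exact H. exact (proj2 (proj2 (proj2 Hxi)) t0 Ht0).
  - nra.
  - rewrite <- beta_cubic by exact H. exact Hzero.
  - exists k. split; [nra |].
    rewrite alpha_cubic, <- (Ropp_involutive (sqrt (K * 3))) by exact H.
    refine (is_derive_ext_loc _ _ _ _ _ Hd).
    apply (filter_imp _ _ (fun t Ht => eq_sym (beta_cubic _ t Ht))).
    exact (char_curve_region_near _ _ _ _ _ Hxi Ht0).
Qed.

End RadialEuler.

Theorem mainTheorem4 (m : nat) (K T : R) (rho u : R -> R -> R) :
  (m = 1%nat \/ m = 2%nat) -> 0 < K -> 0 < T ->
  smooth_on (region T) rho -> smooth_on (region T) u ->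
  (forall r t, region T r t -> 0 < rho r t) ->
  euler_radial (region T) m K 3 rho u ->
  (forall r t, region T r t ->
     cc1 K 3 rho u r t < 0 /\ 0 < cc2 K 3 rho u r t) ->
  forall (tstar eps : R), 0 < eps -> 0 < tstar - eps -> tstar + eps < T ->
  (* (i) 1-wave R: no R-to-C change of the 2-wave *)
  (forall r0 psi, char_curve T (cc2 K 3 rho u) r0 psi ->
     beta m K 3 rho u (psi tstar) tstar > 0 ->
     ~ change_pos_to_neg (fun t => alpha m K 3 rho u (psi t) t) tstar eps) /\
  (* (ii) 1-wave C: no C-to-R change of the 2-wave *)
  (forall r0 psi, char_curve T (cc2 K 3 rho u) r0 psi ->
     beta m K 3 rho u (psi tstar) tstar < 0 ->
     ~ change_neg_to_pos (fun t => alpha m K 3 rho u (psi t) t) tstar eps) /\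
  (* (iii) 2-wave R: no C-to-R change of the 1-wave *)
  (forall r0 xi, char_curve T (cc1 K 3 rho u) r0 xi ->
     alpha m K 3 rho u (xi tstar) tstar > 0 ->
     ~ change_neg_to_pos (fun t => beta m K 3 rho u (xi t) t) tstar eps) /\
  (* (iv) 2-wave C: no R-to-C change of the 1-wave *)
  (forall r0 xi, char_curve T (cc1 K 3 rho u) r0 xi ->
     alpha m K 3 rho u (xi tstar) tstar < 0 ->
     ~ change_pos_to_neg (fun t => beta m K 3 rho u (xi t) t) tstar eps).
Proof.
  intros Hm HK _ Hrho Hu Hpos Heuler Hsub tstar eps Heps Hlo Hhi.
  assert (Ht : 0 < tstar < T) by lra.
  assert (Hm0 : (0 < m)%nat) by (destruct Hm; subst m; auto).
  assert (HK0 : 0 <= K) by lra.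
  pose proof (alpha_along_2_characteristic m K T rho u Hrho Hu Hpos Heuler HK0 Hsub) as Halpha.
  pose proof (beta_along_1_characteristic m K T rho u Hrho Hu Hpos Heuler HK0 Hsub) as Hbeta.
  repeat split.
  - intros r0 psi Hpsi Hb Hchange.
    destruct (Halpha r0 psi tstar Hm0 Hpsi Ht (proj1 Hchange)) as [k [Hk Hd]].
    pose proof (change_pos_to_neg_derive_nonpos _ _ _ _ Heps Hd Hchange). nra.
  - intros r0 psi Hpsi Hb Hchange.
    destruct (Halpha r0 psi tstar Hm0 Hpsi Ht (proj1 Hchange)) as [k [Hk Hd]].
    pose proof (change_neg_to_pos_derive_nonneg _ _ _ _ Heps Hd Hchange). nra.
  - intros r0 xi Hxi Ha Hchange.
    destruct (Hbeta r0 xi tstar Hm0 Hxi Ht (proj1 Hchange)) as [k [Hk Hd]].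
    pose proof (change_neg_to_pos_derive_nonneg _ _ _ _ Heps Hd Hchange). nra.
  - intros r0 xi Hxi Ha Hchange.
    destruct (Hbeta r0 xi tstar Hm0 Hxi Ht (proj1 Hchange)) as [k [Hk Hd]].
    pose proof (change_pos_to_neg_derive_nonpos _ _ _ _ Heps Hd Hchange). nra.
Qed.
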